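(* A commuting pair $(S,P)$ of operators on a Hilbert space is a $\Gamma$-contraction if and only if $(0,S,P)$ is a $\mathbb P$-contraction.
   Context: The pentablock is $\mathbb P=\{(a_{21},\operatorname{tr}A_0,\det A_0): A_0=[a_{ij}]\in M_2(\mathbb C),\ \|A_0\|<1\}\subset\mathbb C^3$ and $\Gamma=\{(z_1+z_2,z_1z_2):z_1,z_2\in\overline{\mathbb D}\}$. A compact $K$ is a spectral set for a commuting tuple if the Taylor joint spectrum lies in $K$ and $\|f(\underline T)\|\le\sup_K|f|$ for every rational $f$ with no poles in $K$. A $\mathbb P$-contraction (resp. $\Gamma$-contraction) is a commuting triple (resp. pair) having $\overline{\mathbb P}$ (resp. $\Gamma$) as a spectral set. *)

From HB Require Import structures.
From mathcomp Require Import all_boot all_order all_algebra.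
From mathcomp Require Import reals complex.
From mathcomp Require Import mpoly.
Set Implicit Arguments. Unset Strict Implicit. Unset Printing Implicit Defensive.
Import Order.TTheory GRing.Theory Num.Theory.
Local Open Scope ring_scope.
Local Open Scope complex_scope.

Record hilbert_space (R : realType) (H : lmodType R[i]) := HilbertSpace {
  ip : H -> H -> R[i];
  ip_linl : forall (a : R[i]) (x y z : H), ip (a *: x + y) z = a * ip x z + ip y z;
  ip_csym : forall x y : H, ip y x = (ip x y)^*;
  ip_ge0 : forall x : H, 0 <= ip x x;
  ip_def : forall x : H, ip x x = 0 -> x = 0;
  ip_complete : forall u : nat -> H,
    (forall e : R, 0 < e -> exists N : nat, forall m n : nat, (N <= m)%N -> (N <= n)%N ->
        Num.sqrt (complex.Re (ip (u m - u n) (u m - u n))) < e) ->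
    exists l : H, forall e : R, 0 < e -> exists N : nat, forall n : nat, (N <= n)%N ->
        Num.sqrt (complex.Re (ip (u n - l) (u n - l))) < e
}.

Definition hnorm (R : realType) (H : lmodType R[i]) (hs : hilbert_space H) (x : H) : R :=
  Num.sqrt (complex.Re (ip hs x x)).

Definition is_bounded_op (R : realType) (H : lmodType R[i]) (hs : hilbert_space H)
  (T : H -> H) : Prop :=
  (forall (a : R[i]) (x y : H), T (a *: x + y) = a *: T x + T y) /\
  (exists M : R, forall x : H, hnorm hs (T x) <= M * hnorm hs x).

Definition commuting_tuple (R : realType) (H : lmodType R[i]) (hs : hilbert_space H)
  (n : nat) (T : 'I_n -> H -> H) : Prop :=
  (forall i, is_bounded_op hs (T i)) /\
  (forall i j (x : H), T i (T j x) = T j (T i x)).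

(* Cochains: functions from subsets S of 'I_n to H (the degree of the component
   at S is #|S|). *)
Definition koszul_d (R : realType) (H : lmodType R[i]) (n : nat) (A : 'I_n -> H -> H)
  (w : {set 'I_n} -> H) : {set 'I_n} -> H :=
  fun S => \sum_(i in S) ((-1) ^+ #|[set j in S | (j < i)%N]|) *: A i (w (S :\ i)).

Definition koszul_exact (R : realType) (H : lmodType R[i]) (n : nat) (A : 'I_n -> H -> H) : Prop :=
  forall w : {set 'I_n} -> H, koszul_d A w = (fun _ => 0) ->
    exists v : {set 'I_n} -> H, koszul_d A v = w.

Definition taylor_spectrum (R : realType) (H : lmodType R[i]) (n : nat) (T : 'I_n -> H -> H)
  (lam : 'I_n -> R[i]) : Prop :=
  ~ koszul_exact (fun i x => T i x - lam i *: x).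

Definition mono_op (R : realType) (H : lmodType R[i]) (n : nat) (T : 'I_n -> H -> H)
  (m : 'X_{1..n}) (x : H) : H :=
  foldr (fun i y => iter (m i) (T i) y) x (enum 'I_n).

Definition poly_op (R : realType) (H : lmodType R[i]) (n : nat) (p : {mpoly R[i][n]})
  (T : 'I_n -> H -> H) (x : H) : H :=
  \sum_(m <- msupp p) p@_m *: mono_op T m x.

(* K is a spectral set for T: the Taylor spectrum lies in K and, for every rational
   f = p/q with no poles in K (q nonvanishing on K), ||f(T)|| <= sup_K |f|, where
   f(T) = p(T) q(T)^{-1}; "||f(T)|| <= sup_K |f|" is written as: for every upper
   bound M of |f| on K, ||f(T) x|| <= M ||x|| for all x. *)
Definition spectral_set (R : realType) (H : lmodType R[i]) (hs : hilbert_space H)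
  (n : nat) (K : ('I_n -> R[i]) -> Prop) (T : 'I_n -> H -> H) : Prop :=
  (forall lam, taylor_spectrum T lam -> K lam) /\
  (forall p q : {mpoly R[i][n]}, (forall z, K z -> q.@[z] != 0) ->
    forall Qinv : H -> H,
      (forall x, Qinv (poly_op q T x) = x /\ poly_op q T (Qinv x) = x) ->
    forall M : R, (forall z, K z -> Normc.normc (p.@[z] / q.@[z]) <= M) ->
    forall x : H, hnorm hs (poly_op p T (Qinv x)) <= M * hnorm hs x).

Definition Gamma (R : realType) : ('I_2 -> R[i]) -> Prop :=
  fun v => exists z1 z2 : R[i], Normc.normc z1 <= 1 /\ Normc.normc z2 <= 1 /\
    v ord0 = z1 + z2 /\ v ord_max = z1 * z2.

Definition vnorm2 (R : realType) (u : 'cV[R[i]]_2) : R :=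
  \sum_(i < 2) complex.Re (u i ord0 * (u i ord0)^*).

Definition mx_norm_lt1 (R : realType) (A : 'M[R[i]]_2) : Prop :=
  exists r : R, 0 <= r /\ r < 1 /\
    forall u : 'cV[R[i]]_2, Num.sqrt (vnorm2 (A *m u)) <= r * Num.sqrt (vnorm2 u).

Definition pentablock (R : realType) : ('I_3 -> R[i]) -> Prop :=
  fun v => exists A : 'M[R[i]]_2, mx_norm_lt1 A /\
    v ord0 = A (lift ord0 ord0) ord0 /\ v (lift ord0 ord0) = \tr A /\ v ord_max = \det A.

Definition pentablock_closure (R : realType) : ('I_3 -> R[i]) -> Prop :=
  fun v => forall e : R, 0 < e -> exists w, pentablock w /\ forall i, Normc.normc (v i - w i) < e.

Definition pair_op (R : realType) (H : lmodType R[i]) (S P : H -> H) : 'I_2 -> H -> H :=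
  fun i => if val i == 0%N then S else P.

Definition triple_op (R : realType) (H : lmodType R[i]) (A S P : H -> H) : 'I_3 -> H -> H :=
  fun i => match val i with 0%N => A | 1%N => S | _ => P end.

Definition gamma_contraction (R : realType) (H : lmodType R[i]) (hs : hilbert_space H)
  (S P : H -> H) : Prop :=
  commuting_tuple hs (pair_op S P) /\ spectral_set hs (@Gamma R) (pair_op S P).

Definition penta_contraction (R : realType) (H : lmodType R[i]) (hs : hilbert_space H)
  (A S P : H -> H) : Prop :=
  commuting_tuple hs (triple_op A S P) /\
  spectral_set hs (@pentablock_closure R) (triple_op A S P).

From mathcomp Require Import all_boot all_order all_algebra.
From mathcomp Require Import reals complex.
From mathcomp Require Import mpoly.
From mathcomp Require Import boolp ring lra.
Set Implicit Arguments. Unset Strict Implicit. Unset Printing Implicit Defensive.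
Import Order.TTheory GRing.Theory Num.Theory.
Local Open Scope ring_scope.

(* The Taylor spectrum of (0, S, P) is {0} x (Taylor spectrum of (S, P)), and a
   polynomial in (a, s, p) evaluated at (0, S, P) is its restriction to a = 0 evaluated
   at (S, P).  Hence the two spectral set conditions are equivalent as soon as the
   closed pentablock projects into Gamma along the a-axis and contains {0} x Gamma.
   The first holds because (tr A, det A) = (z1 + z2, z1 z2) for the eigenvalues z1, z2
   of A, which lie in the closed disc when ||A|| < 1, and Gamma is closed; the second
   because (z1 + z2, z1 z2) is the limit of (tr, det) of diag (r z1, r z2) as r -> 1. *)

Lemma ord3P (i : 'I_3) : i = ord0 \/ i = lift ord0 ord0 \/ i = ord_max.
Proof.
by case: i => [[|[|[|//]]] ?]; [left | right; left | right; right]; apply/val_inj.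
Qed.

Lemma lift0_ord_max n : lift ord0 (@ord_max n) = ord_max.
Proof. exact/val_inj. Qed.

Lemma det_mx2 (F : comNzRingType) (M : 'M[F]_2) :
  \det M = M ord0 ord0 * M ord_max ord_max - M ord0 ord_max * M ord_max ord0.
Proof.
rewrite (expand_det_row _ ord0) !big_ord_recl big_ord0 addr0 /cofactor !det_mx11.
have lift0 (j : 'I_1) : lift ord0 j = ord_max :> 'I_2 by apply/val_inj; rewrite /= (ord1 j).
have lift1 (j : 'I_1) : lift (lift ord0 ord0) j = ord0 :> 'I_2.
  by apply/val_inj; rewrite /= (ord1 j).
by rewrite /= !mxE /= !lift1 !lift0 /bump /= expr0 expr1 mul1r mulN1r mulrN.
Qed.

Lemma mxtrace_mx2 (F : comNzRingType) (M : 'M[F]_2) :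
  \tr M = M ord0 ord0 + M ord_max ord_max.
Proof.
rewrite /mxtrace !big_ord_recl big_ord0 addr0.
by have -> : lift ord0 (ord0 : 'I_1) = ord_max :> 'I_2 by apply/val_inj.
Qed.

Lemma det_mx2_char (F : comNzRingType) (M : 'M[F]_2) (z : F) :
  \det (M - z%:M) = z ^+ 2 - \tr M * z + \det M.
Proof.
rewrite det_mx2 !mxE !eqxx /= mulr0n mulr1n mxtrace_mx2 det_mx2; ring.
Qed.

Section PentablockGeometry.
Local Open Scope complex_scope.
Variable R : realType.
Local Notation normc := (@Normc.normc R).

Lemma normc_ge0 (x : R[i]) : 0 <= normc x.
Proof. by case: x => a b; rewrite /= sqrtr_ge0. Qed.

Lemma normc_real (r : R) : 0 <= r -> normc r%:C = r.
Proof. by move=> r0; rewrite /= expr0n addr0 sqrtr_sqr ger0_norm. Qed.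

Lemma mulcJ_normc (x : R[i]) : x * x^* = (normc x ^+ 2)%:C.
Proof.
case: x => a b /=; rewrite sqr_sqrtr; last by rewrite addr_ge0 // sqr_ge0.
apply/eqP; rewrite eq_complex /= mulrN opprK -!expr2 eqxx /=.
by rewrite mulrN mulrC addNr.
Qed.

Lemma normc_lerB (w z : R[i]) : normc w - normc z <= normc (w - z).
Proof. by have := le_normcD (w - z) z; rewrite subrK; lra. Qed.

Lemma normcM_le1 (x y : R[i]) : normc x <= 1 -> normc y <= 1 -> normc (x * y) <= 1.
Proof.
by move=> hx hy; rewrite Normc.normcM -(mulr1 1) ler_pM ?normc_ge0.
Qed.

Lemma vnorm2E (u : 'cV[R[i]]_2) : vnorm2 u = \sum_i normc (u i ord0) ^+ 2.
Proof. by apply: eq_bigr => i _; rewrite mulcJ_normc. Qed.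

Lemma vnorm2_ge0 (u : 'cV[R[i]]_2) : 0 <= vnorm2 u.
Proof. by rewrite vnorm2E sumr_ge0 // => i _; rewrite sqr_ge0. Qed.

Lemma vnorm2_gt0 (u : 'cV[R[i]]_2) : u != 0 -> 0 < vnorm2 u.
Proof.
move=> u_neq0; rewrite lt_def vnorm2_ge0 andbT; apply: contra u_neq0.
rewrite vnorm2E psumr_eq0 => [/allP u0|i _]; last exact: sqr_ge0.
apply/eqP/matrixP => i j; rewrite (ord1 j) mxE.
by move/(_ i (mem_index_enum _)): u0; rewrite sqrf_eq0 => /eqP/Normc.eq0_normc.
Qed.

Lemma vnorm2Z (z : R[i]) (u : 'cV[R[i]]_2) : vnorm2 (z *: u) = normc z ^+ 2 * vnorm2 u.
Proof.
by rewrite !vnorm2E mulr_sumr; apply: eq_bigr => i _; rewrite mxE Normc.normcM exprMn.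
Qed.

Lemma vnorm2_diag_le (d : 'rV[R[i]]_2) (r : R) (u : 'cV[R[i]]_2) :
  (forall j, normc (d ord0 j) <= r) -> vnorm2 (diag_mx d *m u) <= r ^+ 2 * vnorm2 u.
Proof.
move=> d_le; rewrite !vnorm2E mulr_sumr; apply: ler_sum => j _.
rewrite mul_diag_mx mxE Normc.normcM exprMn ler_wpM2r ?sqr_ge0 //.
by rewrite ler_sqr ?nnegrE ?normc_ge0 // (le_trans (normc_ge0 _) (d_le j)).
Qed.

Lemma mx_norm_lt1_diag (d : 'rV[R[i]]_2) (r : R) :
  0 <= r -> r < 1 -> (forall j, normc (d ord0 j) <= r) -> mx_norm_lt1 (diag_mx d).
Proof.
move=> r0 r1 d_le; exists r; do 2!split => //; move=> u.
rewrite -(ger0_norm r0) -sqrtr_sqr -sqrtrM ?sqr_ge0 // ler_sqrt ?vnorm2_diag_le //.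
by rewrite mulr_ge0 ?sqr_ge0 ?vnorm2_ge0.
Qed.

Lemma char_root_normc_le1 (A : 'M[R[i]]_2) (z : R[i]) :
  mx_norm_lt1 A -> z ^+ 2 - \tr A * z + \det A = 0 -> normc z <= 1.
Proof.
move=> [r [r0 [r1 hA]]] hz.
have /det0P [v v_neq0 hv] : \det (A - z%:M)^T == 0.
  by rewrite det_tr det_mx2_char hz.
have u_neq0 : v^T != 0 by rewrite -(inj_eq (@trmx_inj _ _ _)) trmx0 trmxK.
have Au : A *m v^T = z *: v^T.
  apply/eqP; rewrite -subr_eq0 -mul_scalar_mx -mulmxBl.
  by rewrite -[_ *m _]trmxK trmx_mul trmxK hv trmx0.
have u_gt0 : 0 < Num.sqrt (vnorm2 v^T) by rewrite sqrtr_gt0 vnorm2_gt0.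
have := hA v^T; rewrite Au vnorm2Z sqrtrM ?sqr_ge0 // sqrtr_sqr ger0_norm ?normc_ge0 //.
rewrite ler_pM2r // => /le_trans; apply; exact: ltW.
Qed.

Lemma vieta_roots (t d : R[i]) : exists z1 z2 : R[i], z1 + z2 = t /\ z1 * z2 = d.
Proof.
pose q := sqrtc (t ^+ 2 - 4%:R * d).
have hq : q ^+ 2 = t ^+ 2 - 4%:R * d by rewrite sqr_sqrtc.
have h2 : (2%:R : R[i]) != 0 by rewrite pnatr_eq0.
exists ((t + q) / 2%:R), ((t - q) / 2%:R); split; first by field.
by rewrite -[d](_ : (t ^+ 2 - q ^+ 2) / 4%:R = d); [field | rewrite hq; field].
Qed.

Definition sym_bidisc (s p : R[i]) : Prop :=
  exists z1 z2 : R[i], normc z1 <= 1 /\ normc z2 <= 1 /\ s = z1 + z2 /\ p = z1 * z2.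

Lemma sym_bidisc_roots (s p : R[i]) :
  (forall w, w ^+ 2 - s * w + p = 0 -> normc w <= 1) -> sym_bidisc s p.
Proof.
move=> roots_le1; have [z1 [z2 [hs hp]]] := vieta_roots s p.
by exists z1, z2; rewrite -hs -hp; do !split; apply: roots_le1; rewrite -hs -hp; ring.
Qed.

Lemma sym_bidisc_trace_det (A : 'M[R[i]]_2) : mx_norm_lt1 A -> sym_bidisc (\tr A) (\det A).
Proof. by move=> hA; apply: sym_bidisc_roots => w; apply: char_root_normc_le1. Qed.

Lemma sym_bidisc_closed (s p : R[i]) :
  (forall e : R, 0 < e -> exists s' p', sym_bidisc s' p' /\
      normc (s - s') < e /\ normc (p - p') < e) -> sym_bidisc s p.
Proof.
move=> approx; apply: sym_bidisc_roots => w hw; rewrite leNgt; apply/negP => w_gt1.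
pose d := normc w - 1; have d_gt0 : 0 < d by rewrite subr_gt0.
have w1_gt0 : 0 < normc w + 1 by rewrite ltr_wpDl ?normc_ge0.
pose e := d ^+ 2 / (normc w + 1).
have he : e * (normc w + 1) = d ^+ 2 by rewrite mulfVK // gt_eqF.
have [_ [_ [[z1 [z2 [z1_le1 [z2_le1 [-> ->]]]]] [hs hp]]]] :=
  approx e (divr_gt0 (exprn_gt0 2 d_gt0) w1_gt0).
(* [|w - z_k| >= d] bounds [|(w - z1) (w - z2)|] below by [d^2], while the identity
   [hzw] makes it smaller than [e (|w| + 1) = d^2]. *)
have hzw : (w - z1) * (w - z2) = (s - (z1 + z2)) * w - (p - z1 * z2).
  by apply/eqP; rewrite -subr_eq0 -hw; apply/eqP; ring.
have : normc ((w - z1) * (w - z2)) < d ^+ 2.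
  rewrite hzw; apply: le_lt_trans (le_normcD _ _) _; rewrite normcN Normc.normcM.
  by have := normc_ge0 w; have := normc_ge0 (s - (z1 + z2)); nra.
rewrite ltNge => /negP; apply; rewrite Normc.normcM expr2.
by apply: ler_pM; have := normc_lerB w z1; have := normc_lerB w z2; rewrite /d; lra.
Qed.

Lemma normc_subZr (r : R) (x : R[i]) :
  0 <= r -> r <= 1 -> normc (x - r%:C * x) = (1 - r) * normc x.
Proof.
move=> r0 r1; have -> : x - r%:C * x = (1 - r)%:C * x by rewrite rmorphB rmorph1; ring.
by rewrite Normc.normcM normc_real // subr_ge0.
Qed.

Lemma pentablock_closure_Gamma (v : 'I_3 -> R[i]) :
  pentablock_closure v -> Gamma (fun j : 'I_2 => v (lift ord0 j)).
Proof.
move=> hv; suff : sym_bidisc (v (lift ord0 ord0)) (v ord_max) by rewrite /Gamma /= lift0_ord_max.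
apply: sym_bidisc_closed => e e_gt0; have [w [[A [hA [_ [w1 w2]]]] vw]] := hv e e_gt0.
exists (\tr A), (\det A); split; first exact: sym_bidisc_trace_det.
by rewrite -w1 -w2; split; apply: vw.
Qed.

Lemma Gamma_pentablock_closure (v : 'I_3 -> R[i]) :
  v ord0 = 0 -> Gamma (fun j : 'I_2 => v (lift ord0 j)) -> pentablock_closure v.
Proof.
rewrite /Gamma /= lift0_ord_max => v0 [z1 [z2 [z1_le1 [z2_le1 [vs vp]]]]] e e_gt0.
pose m := Num.min e 1; have m_gt0 : 0 < m by rewrite lt_min e_gt0 ltr01.
have [m_le1 m_le_e] : m <= 1 /\ m <= e by split; rewrite ge_min lexx ?orbT.
(* shrink (z1, z2) radially by r = 1 - m/4 into the open bidisc *)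
pose r := 1 - m / 4%:R; have r0 : 0 <= r by rewrite /r; lra.
have r1 : r < 1 by rewrite /r; lra.
pose d : 'rV[R[i]]_2 := \row_j (r%:C * (if j == ord0 then z1 else z2)).
have d_le j : normc (d ord0 j) <= r.
  by rewrite mxE Normc.normcM normc_real // ler_piMr //; case: ifP.
have trA : \tr (diag_mx d) = r%:C * (z1 + z2).
  by rewrite mxtrace_diag !big_ord_recl big_ord0 !mxE /= addr0 mulrDr.
have detA : \det (diag_mx d) = (r ^+ 2)%:C * (z1 * z2).
  by rewrite det_diag !big_ord_recl big_ord0 !mxE /= mulr1 rmorphXn; ring.
exists (fun i => [:: diag_mx d (lift ord0 ord0) ord0; \tr (diag_mx d); \det (diag_mx d)]`_i).
split; first by exists (diag_mx d); split; [exact: mx_norm_lt1_diag d_le | ].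
have s_le2 : normc (z1 + z2) <= 2%:R.
  by apply: le_trans (le_normcD _ _) _; rewrite -[2%:R]/(1 + 1 : R) lerD.
have p_le1 : normc (z1 * z2) <= 1 by exact: normcM_le1.
move=> i; have [->|[->|->]] := ord3P i => /=.
- by rewrite v0 mxE /= subrr expr0n addr0 sqrtr0.
- rewrite vs trA normc_subZr //; last exact: ltW.
  by apply: le_lt_trans (ler_wpM2l _ s_le2) _; rewrite /r; lra.
- rewrite vp detA normc_subZr ?sqr_ge0 ?expr_le1 ?(ltW r1) //.
  apply: le_lt_trans (ler_wpM2l _ p_le1) _; first by rewrite subr_ge0 expr_le1 // ltW.
  by rewrite mulr1 /r; nra.
Qed.

End PentablockGeometry.

Section ConsSets.
Variable n : nat.

Definition tail_set (T : {set 'I_n.+1}) : {set 'I_n} := [set j | lift ord0 j \in T].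

Definition cons_set (b : bool) (S : {set 'I_n}) : {set 'I_n.+1} :=
  if b then ord0 |: [set lift ord0 j | j in S] else [set lift ord0 j | j in S].

Lemma mem0_lift_set (S : {set 'I_n}) : ord0 \in [set lift ord0 j | j in S] = false.
Proof. by apply/imsetP => [[j _ /eqP]]; rewrite (negbTE (neq_lift _ _)). Qed.

Lemma mem0_cons_set b (S : {set 'I_n}) : (ord0 \in cons_set b S) = b.
Proof. by case: b; rewrite /cons_set ?setU11 ?mem0_lift_set. Qed.

Lemma cons_setK b : cancel (cons_set b) tail_set.
Proof.
move=> S; apply/setP => j; rewrite inE /cons_set.
by case: b; rewrite ?in_setU1 ?(negbTE (neq_lift _ _)) (mem_imset _ _ (@lift_inj _ ord0)).
Qed.

Lemma tail_setK (T : {set 'I_n.+1}) : cons_set (ord0 \in T) (tail_set T) = T.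
Proof.
apply/setP => i; rewrite /cons_set; case: (unliftP ord0 i) => [j ->|->].
  case: (ord0 \in T); rewrite ?in_setU1 ?(negbTE (neq_lift _ _)) /=;
  by rewrite (mem_imset _ _ (@lift_inj _ ord0)) inE.
by case: (ord0 \in T); rewrite ?setU11 ?mem0_lift_set.
Qed.

Lemma tail_setD1 (T : {set 'I_n.+1}) j : tail_set (T :\ lift ord0 j) = tail_set T :\ j.
Proof. by apply/setP => k; rewrite !inE (inj_eq (@lift_inj _ ord0)). Qed.

Lemma tail_setU0 (T : {set 'I_n.+1}) : tail_set (ord0 |: T) = tail_set T.
Proof. by apply/setP => k; rewrite !inE eq_sym (negbTE (neq_lift _ _)). Qed.

Lemma mem0_setD1_lift (T : {set 'I_n.+1}) j : (ord0 \in T :\ lift ord0 j) = (ord0 \in T).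
Proof. by rewrite !inE neq_lift. Qed.

Lemma card_lt_lift (T : {set 'I_n.+1}) (j : 'I_n) :
  #|[set k in T | (k < lift ord0 j)%N]| =
  ((ord0 \in T) + #|[set k in tail_set T | (k < j)%N]|)%N.
Proof.
have cardE m (B : {set 'I_m}) : #|B| = (\sum_(k < m) (k \in B))%N.
  by rewrite -sum1_card big_mkcond; apply: eq_bigr => k _; case: (k \in B).
rewrite !cardE big_ord_recl !inE /= /bump /=; congr (_ + _)%N; first by case: (ord0 \in T).
by apply: eq_bigr => k _; rewrite !inE /bump /= !add1n ltnS.
Qed.

Lemma card_lt0 (T : {set 'I_n.+1}) : #|[set k in T | (k < @ord0 n)%N]| = 0%N.
Proof. by apply/eqP; rewrite cards_eq0; apply/eqP/setP => k; rewrite !inE ltn0 andbF. Qed.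

End ConsSets.

Section KoszulCons.
Variables (R : realType) (H : lmodType R[i]).

Lemma koszul_dZ m (B : 'I_m -> H -> H) (a : R[i]) (w : {set 'I_m} -> H) S :
  (forall i, scalable (B i)) -> koszul_d B (fun S => a *: w S) S = a *: koszul_d B w S.
Proof.
move=> B_lin; rewrite /koszul_d scaler_sumr.
by apply: eq_bigr => i _; rewrite B_lin !scalerA mulrC.
Qed.

Lemma koszul_d0 m (B : 'I_m -> H -> H) S :
  (forall i, scalable (B i)) -> koszul_d B (fun _ => 0) S = 0.
Proof. by move=> B_lin; have := koszul_dZ 0 (fun _ => 0) S B_lin; rewrite !scale0r. Qed.

Variables (n : nat) (A : 'I_n.+1 -> H -> H).
Hypothesis A_lin : forall i, scalable (A i).
Local Notation tailA := (fun j : 'I_n => A (lift ord0 j)).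

Lemma sign_scalerK (b : bool) (x : H) : ((-1) ^+ b : R[i]) *: (((-1) ^+ b : R[i]) *: x) = x.
Proof. by case: b; rewrite ?expr0 ?expr1 ?scale1r ?scaleN1r ?opprK. Qed.

Section HeadZero.
Hypothesis A0 : forall x, A ord0 x = 0.

(* With A_0 = 0 the Koszul complex of A is two shifted copies of that of the tail. *)
Lemma koszul_d_cons0 (w : {set 'I_n.+1} -> H) T :
  koszul_d A w T = ((-1) ^+ (ord0 \in T) : R[i]) *:
    koszul_d tailA (fun S => w (cons_set (ord0 \in T) S)) (tail_set T).
Proof.
rewrite /koszul_d big_mkcond big_ord_recl A0 scaler0 if_same Monoid.mul1m.
rewrite scaler_sumr [in RHS]big_mkcond; apply: eq_bigr => j _.
rewrite [j \in tail_set T]inE; case: (lift ord0 j \in T) => //.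
rewrite card_lt_lift exprD -scalerA -tail_setD1 -[in cons_set _ _](mem0_setD1_lift T j).
by rewrite tail_setK.
Qed.

Lemma koszul_exact_tail : koszul_exact A -> koszul_exact tailA.
Proof.
move=> exactA w dw0.
pose W (T : {set 'I_n.+1}) := if ord0 \in T then 0 else w (tail_set T).
have dW0 : koszul_d A W = (fun _ => 0).
  apply/funext => T; rewrite koszul_d_cons0; case: (ord0 \in T).
    have -> : (fun S => W (cons_set true S)) = (fun _ => 0).
      by apply/funext => S; rewrite /W mem0_cons_set.
    by rewrite koszul_d0 ?scaler0.
  have -> : (fun S => W (cons_set false S)) = w.
    by apply/funext => S; rewrite /W mem0_cons_set cons_setK.
  by rewrite dw0 scaler0.
have [v dv] := exactA W dW0; exists (fun S => v (cons_set false S)); apply/funext => S.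
have dvS : koszul_d A v (cons_set false S) = W (cons_set false S) by rewrite dv.
move: dvS; rewrite koszul_d_cons0 mem0_cons_set cons_setK expr0 scale1r.
by rewrite /W mem0_cons_set cons_setK.
Qed.

Lemma koszul_exact_cons0 : koszul_exact tailA -> koszul_exact A.
Proof.
move=> exact_tail w dw0.
have [V dV] : exists V : bool -> {set 'I_n} -> H,
    forall b, koszul_d tailA (V b) = (fun S => w (cons_set b S)).
  suff hb b : exists v, koszul_d tailA v = (fun S => w (cons_set b S)).
    have [[v0 dv0] [v1 dv1]] := (hb false, hb true).
    by exists (fun b => if b then v1 else v0); case.
  apply: exact_tail; apply/funext => S.
  have : koszul_d A w (cons_set b S) = 0 by rewrite dw0.
  rewrite koszul_d_cons0 mem0_cons_set cons_setK => dS.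
  by rewrite -(sign_scalerK b (koszul_d _ _ _)) dS scaler0.
exists (fun T : {set 'I_n.+1} => ((-1) ^+ (ord0 \in T) : R[i]) *: V (ord0 \in T) (tail_set T)).
apply/funext => T; rewrite koszul_d_cons0.
set V' := fun S => _ *: _.
have -> : V' = (fun S => ((-1) ^+ (ord0 \in T) : R[i]) *: V (ord0 \in T) S).
  by apply/funext => S; rewrite /V' mem0_cons_set cons_setK.
by rewrite koszul_dZ // sign_scalerK dV /= tail_setK.
Qed.

End HeadZero.

(* If A_0 = c, a nonzero scalar, then c^-1 times "insert index 0" is a contracting homotopy. *)
Lemma koszul_exact_cons_unit (c : R[i]) :
  c != 0 -> (forall x, A ord0 x = c *: x) -> koszul_exact A.
Proof.
move=> c_neq0 A0 w dw0.
have Ai0 i : A i 0 = 0 by have := A_lin i 0 0; rewrite !scale0r.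
exists (fun S : {set 'I_n.+1} => if ord0 \in S then 0 else c^-1 *: w (ord0 |: S)).
apply/funext => S; rewrite /koszul_d big_mkcond big_ord_recl.
case S0: (ord0 \in S).
  rewrite card_lt0 expr0 scale1r !inE eqxx /= setD1K // A_lin A0 scalerA mulVf // scale1r.
  rewrite big1 ?addr0 // => j _.
  by case: (lift ord0 j \in S); rewrite // mem0_setD1_lift S0 Ai0 scaler0.
rewrite Monoid.mul1m.
have : koszul_d A w (ord0 |: S) = 0 by rewrite dw0.
rewrite /koszul_d big_mkcond big_ord_recl setU11 card_lt0 expr0 scale1r.
have -> : (ord0 |: S) :\ ord0 = S.
  by apply/setP => k; rewrite !inE; case: eqP => // ->; rewrite S0.
rewrite A0 => /eqP; rewrite addr_eq0 => /eqP dwS.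
rewrite [w S](_ : _ = c^-1 *: (c *: w S)); last by rewrite scalerA mulVf ?scale1r.
rewrite dwS -sumrN scaler_sumr; apply: eq_bigr => j _.
rewrite in_setU1 eq_sym (negbTE (neq_lift _ _)) /=.
case: (lift ord0 j \in S); last by rewrite oppr0 scaler0.
have -> : (ord0 |: S) :\ lift ord0 j = ord0 |: (S :\ lift ord0 j).
  by apply/setP => k; rewrite !inE; case: eqP => // ->; rewrite eq_sym (negbTE (neq_lift _ _)).
rewrite !card_lt_lift !inE eqxx S0 tail_setU0 /= add0n add1n A_lin exprS.
by rewrite scalerN -scaleNr !scalerA mulN1r mulrN mulNr opprK mulrC.
Qed.

End KoszulCons.

Section PolyOp.
Variables (R : realType) (H : lmodType R[i]).

Lemma poly_opE_seq n (p : {mpoly R[i][n]}) (T : 'I_n -> H -> H) x (s : seq 'X_{1..n}) :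
  uniq s -> {subset msupp p <= s} ->
  poly_op p T x = \sum_(m <- s) p@_m *: mono_op T m x.
Proof.
move=> s_uniq supp_s; rewrite /poly_op [RHS](bigID (mem (msupp p))) /=.
rewrite [X in _ + X]big1 ?addr0 => [|m /memN_msupp_eq0 ->]; last exact: scale0r.
rewrite -[RHS]big_filter; apply/perm_big/uniq_perm; rewrite ?filter_uniq ?msupp_uniq //.
by move=> m; rewrite mem_filter; case: (boolP (m \in msupp p)) => // /supp_s ->.
Qed.

Lemma poly_op0 n (T : 'I_n -> H -> H) x : poly_op (0 : {mpoly R[i][n]}) T x = 0.
Proof.
have /eqP supp0 : msupp (0 : {mpoly R[i][n]}) == [::] by rewrite msupp_eq0.
by rewrite /poly_op supp0 big_nil.
Qed.

Lemma poly_opD n (p q : {mpoly R[i][n]}) (T : 'I_n -> H -> H) x :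
  poly_op (p + q) T x = poly_op p T x + poly_op q T x.
Proof.
pose s := undup (msupp p ++ msupp q).
have s_uniq : uniq s := undup_uniq _.
have supp_p : {subset msupp p <= s} by move=> m mp; rewrite mem_undup mem_cat mp.
have supp_q : {subset msupp q <= s} by move=> m mq; rewrite mem_undup mem_cat mq orbT.
have supp_pq : {subset msupp (p + q) <= s} by move=> m /msuppD_le; rewrite mem_undup.
rewrite !(poly_opE_seq _ _ s_uniq) // -big_split /=; apply: eq_bigr => m _.
by rewrite mcoeffD scalerDl.
Qed.

Lemma poly_opZ n (c : R[i]) (p : {mpoly R[i][n]}) (T : 'I_n -> H -> H) x :
  poly_op (c *: p) T x = c *: poly_op p T x.
Proof.
rewrite (poly_opE_seq _ _ (msupp_uniq p)); last exact: msuppZ_le.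
by rewrite /poly_op scaler_sumr; apply: eq_bigr => m _; rewrite mcoeffZ scalerA.
Qed.

Lemma poly_op_sum n I (r : seq I) (F : I -> {mpoly R[i][n]}) (T : 'I_n -> H -> H) x :
  poly_op (\sum_(k <- r) F k) T x = \sum_(k <- r) poly_op (F k) T x.
Proof.
elim: r => [|k r IHr]; first by rewrite !big_nil poly_op0.
by rewrite !big_cons poly_opD IHr.
Qed.

Lemma poly_opX n (m : 'X_{1..n}) (T : 'I_n -> H -> H) x :
  poly_op 'X_[m] T x = mono_op T m x.
Proof. by rewrite /poly_op msuppX big_seq1 mcoeffX eqxx scale1r. Qed.

Variable n : nat.

Definition mnm_tail (m : 'X_{1..n.+1}) : 'X_{1..n} := [multinom m (lift ord0 j) | j < n].

Definition mnm_cons0 (m : 'X_{1..n}) : 'X_{1..n.+1} :=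
  [multinom (if unlift ord0 i is Some j then m j else 0%N) | i < n.+1].

Lemma mnm_cons0K : cancel mnm_cons0 mnm_tail.
Proof. by move=> m; apply/mnmP => j; rewrite !mnmE liftK. Qed.

Lemma mnm_cons0_head (m : 'X_{1..n}) : mnm_cons0 m ord0 = 0%N.
Proof. by rewrite mnmE unlift_none. Qed.

Lemma mono_op_cons (T : 'I_n.+1 -> H -> H) (m : 'X_{1..n.+1}) x :
  mono_op T m x =
  iter (m ord0) (T ord0) (mono_op (fun j => T (lift ord0 j)) (mnm_tail m) x).
Proof.
rewrite /mono_op enum_ordSl /= foldr_map; congr (iter _ _ _).
by congr foldr; apply/funext => j; rewrite /mnm_tail mnmE.
Qed.

Definition cons0 (z : 'I_n -> R[i]) : 'I_n.+1 -> R[i] :=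
  fun i => if unlift ord0 i is Some j then z j else 0.

Lemma cons0_head (z : 'I_n -> R[i]) : cons0 z ord0 = 0.
Proof. by rewrite /cons0 unlift_none. Qed.

Lemma cons0K (z : 'I_n -> R[i]) : (fun j => cons0 z (lift ord0 j)) = z.
Proof. by apply/funext => j; rewrite /cons0 liftK. Qed.

Definition msubst0 (p : {mpoly R[i][n.+1]}) : {mpoly R[i][n]} :=
  \sum_(m <- msupp p) p@_m *: (if m ord0 == 0%N then 'X_[mnm_tail m] else 0).

Definition mlift (p : {mpoly R[i][n]}) : {mpoly R[i][n.+1]} :=
  \sum_(m <- msupp p) p@_m *: 'X_[mnm_cons0 m].

Lemma msubst0_eval (p : {mpoly R[i][n.+1]}) z : (msubst0 p).@[z] = p.@[cons0 z].
Proof.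
rewrite /msubst0 raddf_sum mevalE; apply: eq_bigr => m _.
rewrite /= mevalZ big_ord_recl /cons0 unlift_none; congr (_ * _).
case: eqP => [m0|/eqP/negbTE m0]; last by rewrite meval0 expr0n m0 mul0r.
by rewrite mevalX m0 expr0 mul1r; apply: eq_bigr => j _; rewrite liftK /mnm_tail mnmE.
Qed.

Lemma poly_op_msubst0 (p : {mpoly R[i][n.+1]}) (T : 'I_n.+1 -> H -> H) x :
  (forall y, T ord0 y = 0) ->
  poly_op (msubst0 p) (fun j => T (lift ord0 j)) x = poly_op p T x.
Proof.
move=> T0; rewrite /msubst0 poly_op_sum; apply: eq_bigr => m _.
rewrite poly_opZ mono_op_cons; congr (_ *: _).
case: eqP => [m0|]; first by rewrite poly_opX m0.
by rewrite poly_op0; case: (m ord0) => // k _; rewrite iterS T0.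
Qed.

Lemma mlift_eval (p : {mpoly R[i][n]}) v :
  (mlift p).@[v] = p.@[fun j => v (lift ord0 j)].
Proof.
rewrite /mlift raddf_sum mevalE; apply: eq_bigr => m _.
rewrite /= mevalZ mevalX big_ord_recl mnm_cons0_head expr0 mul1r; congr (_ * _).
by apply: eq_bigr => j _; rewrite /mnm_cons0 mnmE liftK.
Qed.

Lemma poly_op_mlift (p : {mpoly R[i][n]}) (T : 'I_n.+1 -> H -> H) x :
  poly_op (mlift p) T x = poly_op p (fun j => T (lift ord0 j)) x.
Proof.
rewrite /mlift poly_op_sum; apply: eq_bigr => m _.
by rewrite poly_opZ poly_opX mono_op_cons mnm_cons0_head mnm_cons0K.
Qed.

End PolyOp.

Section BoundedOps.
Variables (R : realType) (H : lmodType R[i]) (hs : hilbert_space H).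

Lemma bounded_op0 (T : H -> H) : is_bounded_op hs T -> T 0 = 0.
Proof.
move=> [T_lin _]; have := T_lin 1 0 0; rewrite !scale1r addr0 => T00.
by apply: (@addrI _ (T 0)); rewrite addr0 -{1}T00.
Qed.

Lemma bounded_op_scalable (T : H -> H) : is_bounded_op hs T -> scalable T.
Proof.
move=> T_bd a x; have := T_bd.1 a x 0.
by rewrite !addr0 (bounded_op0 T_bd) addr0.
Qed.

Lemma hnorm0 : hnorm hs 0 = 0.
Proof.
have ip00 : ip hs 0 0 = 0.
  have := ip_linl hs 1 0 0 0; rewrite !scale1r addr0 mul1r => ip0.
  by apply: (@addrI _ (ip hs 0 0)); rewrite addr0 -{1}ip0.
by rewrite /hnorm ip00 /= sqrtr0.
Qed.

Lemma bounded_op_zero : is_bounded_op hs (fun _ => 0).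
Proof.
split=> [a x y|]; first by rewrite scaler0 addr0.
by exists 0 => x; rewrite hnorm0 mul0r.
Qed.

Lemma commuting_tuple_shift_scalable n (T : 'I_n -> H -> H) (lam : 'I_n -> R[i]) :
  commuting_tuple hs T -> forall i, scalable (fun x => T i x - lam i *: x).
Proof.
move=> [T_bd _] i a x /=.
by rewrite (bounded_op_scalable (T_bd i)) scalerBr !scalerA mulrC.
Qed.

End BoundedOps.

Section HeadZeroTuple.
Variables (R : realType) (H : lmodType R[i]) (hs : hilbert_space H) (n : nat).
Variable T : 'I_n.+1 -> H -> H.
Hypothesis T0 : forall x, T ord0 x = 0.
Local Notation tail v := (fun j : 'I_n => v (lift ord0 j)).
Hypothesis tail_comm : commuting_tuple hs (tail T).

Lemma commuting_tuple_cons0 : commuting_tuple hs T.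
Proof.
have [tail_bd tail_cm] := tail_comm; split.
  move=> i; case: (unliftP ord0 i) => [j ->|->]; first exact: tail_bd.
  have -> : T ord0 = (fun _ => 0) by exact: funext.
  exact: bounded_op_zero.
move=> i j x; case: (unliftP ord0 i) => [i' ->|->]; case: (unliftP ord0 j) => [j' ->|->];
  by rewrite ?T0 ?(bounded_op0 (tail_bd _)) //; apply: tail_cm.
Qed.

Lemma taylor_spectrum_head0 (lam : 'I_n.+1 -> R[i]) : taylor_spectrum T lam -> lam ord0 = 0.
Proof.
move=> lam_spec; apply/eqP/negPn/negP => lam0_neq0; apply: lam_spec.
apply: (koszul_exact_cons_unit (commuting_tuple_shift_scalable lam commuting_tuple_cons0)
  (c := - lam ord0)); first by rewrite oppr_eq0.
by move=> x; rewrite T0 sub0r scaleNr.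
Qed.

Lemma taylor_spectrum_cons0 (lam : 'I_n.+1 -> R[i]) : lam ord0 = 0 ->
  taylor_spectrum T lam <-> taylor_spectrum (tail T) (tail lam).
Proof.
move=> lam0; have head0 x : T ord0 x - lam ord0 *: x = 0 by rewrite T0 lam0 scale0r subr0.
have lin := commuting_tuple_shift_scalable lam commuting_tuple_cons0.
by split=> nexact exact; apply: nexact;
  [exact: koszul_exact_cons0 lin head0 exact | exact: koszul_exact_tail lin head0 exact].
Qed.

Variables (K : ('I_n.+1 -> R[i]) -> Prop) (K' : ('I_n -> R[i]) -> Prop).

Lemma spectral_set_tail :
  (forall v : 'I_n.+1 -> R[i], K v -> K' (tail v)) ->
  spectral_set hs K T -> spectral_set hs K' (tail T).
Proof.
move=> K_tail [K_spec K_bound]; split.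
  move=> lam lam_spec; rewrite -(cons0K lam); apply/K_tail/K_spec.
  by apply/(taylor_spectrum_cons0 (cons0_head lam)); rewrite cons0K.
move=> p q q_neq0 Qinv QinvK M pq_le x.
rewrite -poly_op_mlift; apply: (K_bound (mlift p) (mlift q)) => [z Kz|y|z Kz].
- by rewrite mlift_eval; apply/q_neq0/K_tail.
- by rewrite !poly_op_mlift; apply: QinvK.
- by rewrite !mlift_eval; apply/pq_le/K_tail.
Qed.

Lemma spectral_set_cons0 :
  (forall v : 'I_n.+1 -> R[i], v ord0 = 0 -> K' (tail v) -> K v) ->
  spectral_set hs K' (tail T) -> spectral_set hs K T.
Proof.
move=> K'_cons0 [K'_spec K'_bound]; split.
  move=> lam lam_spec; have lam0 := taylor_spectrum_head0 lam_spec.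
  by apply: K'_cons0 (K'_spec _ _) => //; apply/(taylor_spectrum_cons0 lam0).
have K'_K z : K' z -> K (cons0 z).
  by move=> K'z; apply: K'_cons0; rewrite ?cons0K ?cons0_head.
move=> p q q_neq0 Qinv QinvK M pq_le x.
rewrite -(poly_op_msubst0 _ _ T0); apply: (K'_bound (msubst0 p) (msubst0 q)) => [z Kz|y|z Kz].
- by rewrite msubst0_eval; apply/q_neq0/K'_K.
- by rewrite !(poly_op_msubst0 _ _ T0); apply: QinvK.
- by rewrite !msubst0_eval; apply/pq_le/K'_K.
Qed.

End HeadZeroTuple.

Theorem mainTheorem12 (R : realType) (H : lmodType R[i]) (hs : hilbert_space H)
  (S P : H -> H) :
  commuting_tuple hs (pair_op S P) ->
  (gamma_contraction hs S P <-> penta_contraction hs (fun _ => 0) S P).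
Proof.
move=> pair_comm; set T := triple_op (fun _ : H => 0) S P.
have T0 x : T ord0 x = 0 by [].
have tailT : (fun j : 'I_2 => T (lift ord0 j)) = pair_op S P.
  by apply/funext => -[[|[|//]] ?].
have tail_comm : commuting_tuple hs (fun j : 'I_2 => T (lift ord0 j)) by rewrite tailT.
rewrite /gamma_contraction /penta_contraction -/T -tailT.
split=> [[_ ?] | [_ ?]]; split => //.
- exact: commuting_tuple_cons0 T0 tail_comm.
- exact: (spectral_set_cons0 T0 tail_comm (@Gamma_pentablock_closure R)).
- exact: (spectral_set_tail T0 tail_comm (@pentablock_closure_Gamma R)).
Qed.
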